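(* Let $\eta \in [0,1]$ and let $\Phi_{\eta}:\mathcal{L}(\mathbb{C}^2)\to\mathcal{L}(\mathbb{C}^2)$ be the qubit depolarizing channel $\Phi_{\eta}(\rho) = (1-\eta)\rho + \eta\,\frac{\mathbb{1}}{2}$. If $\eta > 0$, then every channel $\Psi$ complementary to $\Phi_{\eta}$ has positive coherent information, i.e. $\operatorname{I}_{\mathrm{C}}(\Psi) > 0$.
   Context: A quantum channel $\Phi:\mathcal{L}(\mathcal{A})\to\mathcal{L}(\mathcal{B})$ (completely positive, trace-preserving, finite-dimensional spaces) can be written as $\Phi(\rho)=\operatorname{Tr}_{\mathcal{E}}(A\rho A^{\ast})$ for an isometry $A\in\mathcal{L}(\mathcal{A},\mathcal{B}\otimes\mathcal{E})$ (a Stinespring representation). For any such representation, the channel $\Psi:\mathcal{L}(\mathcal{A})\to\mathcal{L}(\mathcal{E})$ given by $\Psi(\rho)=\operatorname{Tr}_{\mathcal{B}}(A\rho A^{\ast})$ is called a complementary channel to $\Phi$. For a channel $\Psi$ with complementary channel $\Phi$ (each is complementary to the other via the same isometry), the coherent information of a state $\rho$ through $\Psi$ is $\operatorname{I}_{\mathrm{C}}(\rho;\Psi)=\operatorname{H}(\Psi(\rho))-\operatorname{H}(\Phi(\rho))$, where $\operatorname{H}(\sigma)=-\operatorname{Tr}(\sigma\log\sigma)$ is the von Neumann entropy; this does not depend on the choice of complementary channel. The coherent information of $\Psi$ is $\operatorname{I}_{\mathrm{C}}(\Psi)=\max_{\rho}\operatorname{I}_{\mathrm{C}}(\rho;\Psi)$,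 maximized over density operators $\rho$ on the input space. *)

From HB Require Import structures.
From mathcomp Require Import all_boot all_order all_algebra.
From mathcomp Require Import classical_sets reals ereal exp.
From mathcomp.real_closed Require Import complex.
Set Implicit Arguments. Unset Strict Implicit. Unset Printing Implicit Defensive.
Import Order.TTheory GRing.Theory Num.Theory.
Local Open Scope ring_scope.
Local Open Scope complex_scope.

Section QDefs.
Variable R : realType.
Local Notation C := R[i].

Definition adjmx m n (A : 'M[C]_(m, n)) : 'M[C]_(n, m) := (map_mx Num.conj A)^T.

Definition density n (rho : 'M[C]_n) : Prop :=
  [/\ adjmx rho = rho,
      (forall x : 'cV[C]_n, 0 <= (adjmx x *m rho *m x) 0 0)
    & \tr rho = 1].

Definition is_isometry m n (A : 'M[C]_(m, n)) : Prop := adjmx A *m A = 1%:M.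

(* partial traces on L(C^b (x) C^e), index of |i>|k> is mxvec_index i k *)
Definition ptrace2 b e (X : 'M[C]_(b * e)) : 'M[C]_b :=
  \matrix_(i, j) \sum_(k < e) X (mxvec_index i k) (mxvec_index j k).
Definition ptrace1 b e (X : 'M[C]_(b * e)) : 'M[C]_e :=
  \matrix_(k, l) \sum_(i < b) X (mxvec_index i k) (mxvec_index i l).

(* eigenvalues (with algebraic multiplicity): the roots of the characteristic
   polynomial, which splits over the algebraically closed field C *)
Definition spectrum n (A : 'M[C]_n) : seq C :=
  sval (closed_field_poly_normal (char_poly A)).

Definition xlnx (x : R) : R := if x == 0 then 0 else x * ln x.

(* von Neumann entropy H(s) = - Tr (s log s) = - sum_lambda lambda log lambda
   (for a density operator the eigenvalues are real, so we take real parts) *)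
Definition entropy n (s : 'M[C]_n) : R :=
  - \sum_(z <- spectrum s) xlnx (@complex.Re R z).

Definition depol (eta : R) (rho : 'M[C]_2) : 'M[C]_2 :=
  (1 - eta)%:C *: rho + (eta%:C * \tr rho / 2%:R) *: 1%:M.

Definition coh_info_state a b e (Psi : 'M[C]_a -> 'M[C]_e)
  (Phi : 'M[C]_a -> 'M[C]_b) (rho : 'M[C]_a) : R :=
  entropy (Psi rho) - entropy (Phi rho).

(* coherent information: maximum (here: supremum in the extended reals,
   which is attained) over density operators *)
Definition coh_info a b e (Psi : 'M[C]_a -> 'M[C]_e)
  (Phi : 'M[C]_a -> 'M[C]_b) : \bar R :=
  ereal_sup [set (coh_info_state Psi Phi rho)%:E | rho in [set rho | density rho]].

End QDefs.

From HB Require Import structures.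
From mathcomp Require Import all_boot all_order all_algebra.
From mathcomp Require Import classical_sets reals ereal exp.
From mathcomp.real_closed Require Import complex.
From mathcomp Require Import ring lra.
Import Order.TTheory GRing.Theory Num.Theory.
Set Implicit Arguments. Unset Strict Implicit. Unset Printing Implicit Defensive.
Local Open Scope ring_scope.
Local Open Scope complex_scope.

(* Feed in rho = diag(a, b).  The complementary output is W W^* for the
   e x 4 matrix W whose columns are sqrt(p_j) (<i| (x) 1) V |j>, so it has the
   nonzero spectrum of the Gram matrix W^* W.  By the Stinespring relation
   these inner products are entries of depol(|j'><j|): W^* W does not depend
   on V and has spectrum {l1, l2, b eta/2, a eta/2} with l1 + l2 = 1 - eta/2,
   while depol(rho) has spectrum (1 - eta) a + eta/2, (1 - eta) b + eta/2.
   Superadditivity and tangent bounds of x ln x, with ln(a/b) tuned so that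
   the first-order terms cancel, leave a coherent information >= b eta/2 > 0. *)

Lemma char_poly_block_diag (F : comNzRingType) m n (A : 'M[F]_m) (B : 'M[F]_n) :
  char_poly (block_mx A 0 0 B) = char_poly A * char_poly B.
Proof. by rewrite /char_poly char_block_diag_mx det_ublock. Qed.

Lemma char_poly_mulmxC (F : comNzRingType) m n (B : 'M[F]_(m, n)) (C : 'M[F]_(n, m)) :
  char_poly (B *m C) * 'X^n = char_poly (C *m B) * 'X^m.
Proof.
pose B' := map_mx polyC B; pose C' := map_mx polyC C.
pose N := block_mx ('X%:M : 'M_m) B' ('X *: C') ('X%:M : 'M_n).
pose L := block_mx (1%:M : 'M_m) 0 (- C') (1%:M : 'M_n).
have detL : \det L = 1 by rewrite det_lblock !det1 mulr1.
have LN : L *m N = block_mx ('X%:M) B' 0 (char_poly_mx (C *m B)).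
  rewrite mulmx_block !mul1mx !mul0mx !addr0 mulNmx mul_mx_scalar addNr.
  by rewrite /char_poly_mx map_mxM -/B' -/C' addrC mulNmx.
have NL : N *m L = block_mx (char_poly_mx (B *m C)) B' 0 ('X%:M).
  rewrite mulmx_block !mulmx1 !mulmx0 !add0r mulmxN mul_scalar_mx scalerN subrr.
  by rewrite /char_poly_mx map_mxM -/B' -/C'.
have := congr1 determinant LN; rewrite det_mulmx detL mul1r det_ublock det_scalar.
have := congr1 determinant NL; rewrite det_mulmx detL mulr1 det_ublock det_scalar.
by rewrite /char_poly => -> ->; rewrite mulrC.
Qed.

Lemma det_mx2 (F : comNzRingType) (A : 'M[F]_2) :
  \det A = A ord0 ord0 * A ord_max ord_max - A ord0 ord_max * A ord_max ord0.
Proof.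
rewrite (expand_det_row _ ord0) big_ord_recl big_ord1 /cofactor !det_mx11 !mxE /=.
have -> : lift ord0 (0 : 'I_1) = ord_max :> 'I_2 by apply/val_inj.
have -> : lift (ord_max : 'I_2) (0 : 'I_1) = ord0 :> 'I_2 by apply/val_inj.
by rewrite /= expr0 expr1 mul1r; ring.
Qed.

Lemma char_poly_mx2 (F : comNzRingType) (A : 'M[F]_2) l1 l2 :
  l1 + l2 = A ord0 ord0 + A ord_max ord_max -> l1 * l2 = \det A ->
  char_poly A = ('X - l1%:P) * ('X - l2%:P).
Proof.
move=> sum_l prod_l; rewrite /char_poly det_mx2 /char_poly_mx !mxE /=.
have -> : ('X - l1%:P) * ('X - l2%:P) = 'X^2 - (l1 + l2)%:P * 'X + (l1 * l2)%:P.
  by rewrite polyCD polyCM; ring.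
rewrite sum_l prod_l det_mx2 polyCD polyCB !polyCM; ring.
Qed.

Lemma char_poly_spectrum (R : realType) n (A : 'M[R[i]]_n) :
  char_poly A = \prod_(z <- spectrum A) ('X - z%:P).
Proof.
rewrite /spectrum; case: closed_field_poly_normal => s /= ->.
by rewrite (monicP (char_poly_monic A)) scale1r.
Qed.

Lemma entropy_char_poly_mulXn (R : realType) n (A : 'M[R[i]]_n) (s : seq R[i]) k j :
  char_poly A * 'X^k = \prod_(z <- s) ('X - z%:P) * 'X^j ->
  entropy A = - \sum_(z <- s) xlnx (complex.Re z).
Proof.
have Xn_prod k' : 'X^k' = \prod_(z <- nseq k' (0 : R[i])) ('X - z%:P).
  by elim: k' => [|k' IH]; rewrite ?big_nil ?expr0 // exprS big_cons IH subr0.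
have xlnx_zeros k' : \sum_(z <- nseq k' (0 : R[i])) xlnx (complex.Re z) = 0.
  by rewrite big1_seq // => z /andP [_ /nseqP [-> _]]; rewrite /xlnx eqxx.
rewrite char_poly_spectrum !Xn_prod -!big_cat => /prod_XsubC_eq perm_s.
have : \sum_(z <- spectrum A ++ nseq k 0) xlnx (complex.Re z)
     = \sum_(z <- s ++ nseq j 0) xlnx (complex.Re z) by exact: perm_big.
by rewrite !big_cat /= !xlnx_zeros !addr0 /entropy => ->.
Qed.

Lemma entropy_real_char_poly (R : realType) n (A : 'M[R[i]]_n) (s : seq R) :
  char_poly A = \prod_(x <- s) ('X - x%:C%:P) -> entropy A = - \sum_(x <- s) xlnx x.
Proof.
move=> charA; rewrite (@entropy_char_poly_mulXn _ _ _ (map (real_complex R) s) 0 0).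
  by rewrite big_map.
by rewrite !expr0 !mulr1 big_map.
Qed.

Lemma entropy_mulmxC (R : realType) m n (B : 'M[R[i]]_(m, n)) (C : 'M[R[i]]_(n, m)) :
  entropy (B *m C) = entropy (C *m B).
Proof.
apply: (entropy_char_poly_mulXn (k := n) (j := m)).
by rewrite char_poly_mulmxC char_poly_spectrum.
Qed.

Lemma exists_nonneg_roots (R : rcfType) (t d : R) :
  0 <= t -> 0 <= d -> 4%:R * d <= t ^+ 2 ->
  exists l1 l2, [/\ 0 <= l1, 0 <= l2, l1 + l2 = t & l1 * l2 = d].
Proof.
move=> t_ge0 d_ge0 disc; pose r := Num.sqrt (t ^+ 2 - 4%:R * d).
have r_ge0 : 0 <= r := sqrtr_ge0 _.
have r2 : r ^+ 2 = t ^+ 2 - 4%:R * d by rewrite sqr_sqrtr // subr_ge0.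
have r_le_t : r <= t by rewrite -(ler_pXn2r (_ : 0 < 2)%N) ?nnegrE // r2; lra.
exists ((t + r) / 2%:R), ((t - r) / 2%:R); split; [lra | lra | lra |].
apply: (@mulfI _ 4%:R); first by rewrite pnatr_eq0.
have -> : 4%:R * ((t + r) / 2%:R * ((t - r) / 2%:R)) = t ^+ 2 - r ^+ 2 by field.
by rewrite r2; ring.
Qed.

Lemma exists_depol_gram_roots (R : realType) (eta a b : R) :
  0 < eta -> eta <= 1 -> 0 < a -> 0 < b -> a + b = 1 ->
  exists l1 l2, [/\ 0 <= l1, 0 <= l2, l1 + l2 = 1 - eta / 2%:R &
    l1 * l2 = a * b * ((1 - eta / 2%:R) ^+ 2 - (1 - eta) ^+ 2)].
Proof.
move=> eta_gt0 eta_le1 a_gt0 b_gt0 ab1; set T := 1 - eta / 2%:R.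
have T_gt0 : 0 < T by rewrite /T; lra.
have ab_le : 4%:R * (a * b) <= 1 by have := sqr_ge0 (a - b); nra.
have disc_ge0 : 0 <= T ^+ 2 - (1 - eta) ^+ 2 by rewrite /T; nra.
apply: exists_nonneg_roots; first exact: ltW.
  by rewrite !mulr_ge0 // ltW.
nra.
Qed.

Lemma exists_ln_ratio (R : realType) (c : R) :
  exists a b : R, [/\ 0 < a, 0 < b, a + b = 1 & ln a = ln b + c].
Proof.
pose K := sequences.expR c; have K_gt0 : 0 < K := expR_gt0 c.
exists (K / (1 + K)), (1 + K)^-1; split.
- by rewrite divr_gt0 //; lra.
- by rewrite invr_gt0; lra.
- by rewrite -[X in _ + X]mul1r -mulrDl addrC divff //; lra.
- by rewrite lnM ?posrE ?invr_gt0 ?expRK //; lra.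
Qed.

Lemma xlnx_gt0 (R : realType) (x : R) : 0 < x -> xlnx x = x * ln x.
Proof. by move=> x_gt0; rewrite /xlnx gt_eqF. Qed.

Lemma xlnx_ge_tangent (R : realType) (x y : R) : 0 < x -> 0 <= y ->
  xlnx x + (ln x + 1) * (y - x) <= xlnx y.
Proof.
move=> x_gt0; rewrite le0r => /orP [/eqP -> | y_gt0].
  by rewrite /xlnx (gt_eqF x_gt0) eqxx; lra.
rewrite !xlnx_gt0 //.
have : ln (x / y) <= x / y - 1.
  have := divr_gt0 x_gt0 y_gt0; have := @le_ln1Dx R (x / y - 1).
  by rewrite addrCA subrr addr0 => ln_le ?; apply: ln_le; lra.
rewrite ln_div ?posrE // -(ler_pM2l y_gt0).
have -> : y * (x / y - 1) = x - y by field; rewrite gt_eqF.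
nra.
Qed.

Lemma xlnx_superadditive (R : realType) (x y : R) : 0 <= x -> 0 <= y ->
  xlnx x + xlnx y <= xlnx (x + y).
Proof.
rewrite le0r => /orP [/eqP -> | x_gt0]; first by rewrite add0r {1}/xlnx eqxx add0r.
rewrite le0r => /orP [/eqP -> | y_gt0]; first by rewrite addr0 {2}/xlnx eqxx addr0.
rewrite !xlnx_gt0 ?addr_gt0 //.
have lnx : ln x <= ln (x + y) by rewrite ler_ln ?posrE; lra.
have lny : ln y <= ln (x + y) by rewrite ler_ln ?posrE; lra.
nra.
Qed.

(* Bound x ln x below by its tangents at 1 - eta/2, eta/2 and a eta/2: the
   prescribed value of ln a - ln b makes the first-order terms cancel. *)
Lemma depol_diag_gap (R : realType) (eta a b l1 l2 : R) :
  0 < eta -> eta <= 1 -> 0 < a -> 0 < b -> a + b = 1 ->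
  ln a = ln b + (1 - eta) / (eta / 2%:R) * (ln (1 - eta / 2%:R) - ln (eta / 2%:R)) ->
  0 <= l1 -> 0 <= l2 -> l1 + l2 = 1 - eta / 2%:R ->
  b * (eta / 2%:R) <=
    xlnx ((1 - eta) * a + eta / 2%:R) + xlnx ((1 - eta) * b + eta / 2%:R)
    - (xlnx l1 + xlnx l2 + xlnx (a * (eta / 2%:R)) + xlnx (b * (eta / 2%:R))).
Proof.
move=> eta_gt0 eta_le1 a_gt0 b_gt0 ab1 ln_ab l1_ge0 l2_ge0 l12.
set h := eta / 2%:R in ln_ab l12 *; set T := 1 - h in ln_ab l12 *.
have h_gt0 : 0 < h by rewrite divr_gt0.
have eta_h : eta = 2%:R * h by rewrite /h mulrC divfK ?pnatr_eq0.
have T_gt0 : 0 < T by rewrite /T; lra.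
have := xlnx_superadditive l1_ge0 l2_ge0; rewrite l12 -/T => super.
have := @xlnx_ge_tangent _ T ((1 - eta) * a + h) T_gt0 ltac:(nra) => tanT.
have := @xlnx_ge_tangent _ h ((1 - eta) * b + h) h_gt0 ltac:(nra) => tanh.
have := @xlnx_ge_tangent _ (a * h) h (mulr_gt0 a_gt0 h_gt0) (ltW h_gt0) => tanah.
have xlnx_bh : xlnx (b * h) = b * h * (ln b + ln h) by rewrite xlnx_gt0 ?mulr_gt0 // lnM.
rewrite lnM ?posrE // ln_ab in tanah.
have linear_terms :
    (ln T + 1) * ((1 - eta) * a + h - T) + (ln h + 1) * ((1 - eta) * b + h - h)
    + (ln b + (1 - eta) / h * (ln T - ln h) + ln h + 1) * (h - a * h)
    - b * h * (ln b + ln h) = b * h.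
  have -> : a = 1 - b by lra.
  by rewrite /T eta_h; field; rewrite gt_eqF.
have bh_gt0 : 0 < b * h by rewrite mulr_gt0.
lra.
Qed.

Definition flip2 (c : 'I_2) : 'I_2 := if c == ord0 then ord_max else ord0.

Lemma ord2P (c : 'I_2) : c = ord0 \/ c = ord_max.
Proof. by case: c => [[|[|c]]] lt_c2; [left | right |]; rewrite //; apply/val_inj. Qed.

Lemma big_ord2 (T : Type) (idx : T) (op : Monoid.law idx) (F : 'I_2 -> T) :
  \big[op/idx]_(j < 2) F j = op (F ord0) (F ord_max).
Proof. by rewrite big_ord_recl big_ord1; congr (op _ (F _)); apply/val_inj. Qed.

Lemma big_ord2_flip (T : nmodType) (g : 'I_2 -> T) c :
  \sum_(j < 2) g j = g c + g (flip2 c).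
Proof. by rewrite big_ord2; case: (ord2P c) => -> //=; rewrite addrC. Qed.

Lemma conj_real (R : realType) (x : R) : Num.conj x%:C = x%:C.
Proof. exact: conjc_real. Qed.

Definition diag_state (R : realType) n (s : 'I_n -> R) : 'M[R[i]]_n :=
  diag_mx (\row_j (s j ^+ 2)%:C).

Lemma mxtrace_diag_state (R : realType) n (s : 'I_n -> R) :
  \tr (diag_state s) = (\sum_j s j ^+ 2)%:C.
Proof. by rewrite mxtrace_diag rmorph_sum; apply: eq_bigr => j _; rewrite mxE. Qed.

Lemma density_diag_state (R : realType) n (s : 'I_n -> R) :
  \sum_j s j ^+ 2 = 1 -> density (diag_state s).
Proof.
move=> s_norm; split.
- apply/matrixP => c c'; rewrite !mxE.
  by case: (eqVneq c c') => [->|ne]; rewrite ?eqxx ?mulr1n ?conj_real // !mulr0n rmorph0.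
- move=> x; rewrite mul_mx_diag mxE; apply: sumr_ge0 => j _.
  rewrite !mxE -mulrA mulrC -mulrA mulr_ge0 ?mul_conjC_ge0 //.
  by rewrite ler0c sqr_ge0.
- by rewrite mxtrace_diag_state s_norm.
Qed.

Lemma depol_delta_mx (R : realType) (eta : R) (a b i' i : 'I_2) :
  depol eta (delta_mx a b) i' i =
  (1 - eta)%:C * ((i' == a) && (i == b))%:R + eta%:C * (a == b)%:R / 2%:R * (i' == i)%:R.
Proof.
rewrite /depol !mxE /mxtrace big_ord2 !mxE; congr (_ + _).
by case: (ord2P a) => ->; case: (ord2P b) => -> /=; rewrite ?addr0 ?add0r mulr_natr.
Qed.

Lemma adjmx_row_mx (R : realType) m n1 n2 (A : 'M[R[i]]_(m, n1)) (B : 'M[R[i]]_(m, n2)) :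
  adjmx (row_mx A B) = col_mx (adjmx A) (adjmx B).
Proof. by rewrite /adjmx map_row_mx tr_row_mx. Qed.

Section Stinespring.
Variables (R : realType) (eta : R) (e : nat) (V : 'M[R[i]]_(2 * e, 2)).
Hypothesis stineV : forall rho, ptrace2 (V *m rho *m adjmx V) = depol eta rho.

Lemma stinespring_inner (i j i' j' : 'I_2) :
  \sum_(k < e) V (mxvec_index i' k) j' * Num.conj (V (mxvec_index i k) j)
  = depol eta (delta_mx j' j) i' i.
Proof.
rewrite -stineV mxE.
have -> : V *m delta_mx j' j *m adjmx V = col j' V *m row j (adjmx V).
  by rewrite rowE colE !mulmxA -(mulmxA V (delta_mx j' 0)) mul_delta_mx.
by apply: eq_bigr => k _; rewrite mxE big_ord1 !mxE.
Qed.

(* Column c of [env_cols s g] is the vector s_(g c) (<c| (x) 1) V |g c> of C^e. *)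
Definition env_cols (s : 'I_2 -> R) (g : 'I_2 -> 'I_2) : 'M[R[i]]_(e, 2) :=
  \matrix_(k, c) (V (mxvec_index c k) (g c) * (s (g c))%:C).

Definition env_frame (s : 'I_2 -> R) : 'M[R[i]]_(e, 2 + 2) :=
  row_mx (env_cols s id) (env_cols s flip2).

Lemma complementary_diag_state (s : 'I_2 -> R) :
  ptrace1 (V *m diag_state s *m adjmx V) = env_frame s *m adjmx (env_frame s).
Proof.
rewrite adjmx_row_mx mul_row_col mul_mx_diag; apply/matrixP => k l.
rewrite !mxE -big_split; apply: eq_bigr => i _; rewrite mxE (big_ord2_flip _ i).
by congr (_ + _); rewrite !mxE !rmorphM /= !conj_real /=; ring.
Qed.

Lemma env_cols_gram (s : 'I_2 -> R) (g g' : 'I_2 -> 'I_2) :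
  adjmx (env_cols s g) *m env_cols s g' =
  \matrix_(c, c') ((s (g c) * s (g' c'))%:C * depol eta (delta_mx (g' c') (g c)) c' c).
Proof.
apply/matrixP => c c'; rewrite [LHS]mxE [RHS]mxE -stinespring_inner mulr_sumr.
by apply: eq_bigr => k _; rewrite !mxE !rmorphM /= conj_real; ring.
Qed.

Lemma env_frame_gram (s : 'I_2 -> R) :
  adjmx (env_frame s) *m env_frame s =
  block_mx (adjmx (env_cols s id) *m env_cols s id) 0
           0 (adjmx (env_cols s flip2) *m env_cols s flip2).
Proof.
rewrite adjmx_row_mx mul_col_row; congr block_mx; apply/matrixP => c c';
  rewrite env_cols_gram [LHS]mxE depol_delta_mx [RHS]mxE;
  by case: (ord2P c) => ->; case: (ord2P c') => -> /=; rewrite !(mulr0, mul0r, addr0).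
Qed.

Lemma env_cols_gram_id (s : 'I_2 -> R) c c' :
  (adjmx (env_cols s id) *m env_cols s id) c c' =
  (s c * s c')%:C * ((1 - eta)%:C + eta%:C / 2%:R * (c' == c)%:R).
Proof.
rewrite env_cols_gram mxE depol_delta_mx /=.
by case: (ord2P c) => ->; case: (ord2P c') => -> /=; rewrite ?mulr1 ?mulr0 ?addr0.
Qed.

Lemma env_cols_gram_flip (s : 'I_2 -> R) c c' :
  (adjmx (env_cols s flip2) *m env_cols s flip2) c c' =
  (s (flip2 c) ^+ 2 * (eta / 2%:R))%:C * (c' == c)%:R.
Proof.
rewrite env_cols_gram mxE depol_delta_mx /=.
case: (ord2P c) => ->; case: (ord2P c') => -> /=; rewrite ?mulr0n ?mulr1n ?mulr0 //;
  by rewrite !(rmorphM, rmorphXn, fmorphV, rmorph_nat) /=; ring.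
Qed.

Lemma char_poly_env_frame_gram (s : 'I_2 -> R) (l1 l2 : R) :
  l1 + l2 = (s ord0 ^+ 2 + s ord_max ^+ 2) * (1 - eta / 2%:R) ->
  l1 * l2 = s ord0 ^+ 2 * s ord_max ^+ 2 * ((1 - eta / 2%:R) ^+ 2 - (1 - eta) ^+ 2) ->
  char_poly (adjmx (env_frame s) *m env_frame s) =
  \prod_(x <- [:: l1; l2; s ord_max ^+ 2 * (eta / 2%:R); s ord0 ^+ 2 * (eta / 2%:R)])
    ('X - x%:C%:P).
Proof.
move=> /(congr1 (real_complex R)) sum_l /(congr1 (real_complex R)) prod_l.
rewrite env_frame_gram char_poly_block_diag (char_poly_mx2 (l1 := l1%:C) (l2 := l2%:C)).
- rewrite char_poly_trig; last first.
    apply/is_trig_mxP => c c' lt_cc'.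
    rewrite env_cols_gram_flip (_ : (c' == c) = false) ?mulr0 //.
    by apply/eqP => eq_c; rewrite eq_c ltnn in lt_cc'.
  rewrite !big_cons big_nil mulr1 big_ord2 !env_cols_gram_flip !eqxx !mulr1 !mulrA.
  congr (_ * ('X - _%:P) * ('X - _%:P));
  by rewrite /= !(rmorphM, rmorphXn, fmorphV, rmorph_nat).
- move: sum_l; rewrite !env_cols_gram_id !eqxx /=.
  rewrite !(rmorphM, rmorphD, rmorphB, rmorphN, rmorphXn, fmorphV, rmorph_nat, rmorph1) /=.
  by move=> ->; field.
- move: prod_l; rewrite det_mx2 !env_cols_gram_id /=.
  rewrite !(rmorphM, rmorphD, rmorphB, rmorphN, rmorphXn, fmorphV, rmorph_nat, rmorph1) /=.
  by move=> ->; field.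
Qed.

Lemma entropy_complementary_diag_state (s : 'I_2 -> R) (l1 l2 : R) :
  l1 + l2 = (s ord0 ^+ 2 + s ord_max ^+ 2) * (1 - eta / 2%:R) ->
  l1 * l2 = s ord0 ^+ 2 * s ord_max ^+ 2 * ((1 - eta / 2%:R) ^+ 2 - (1 - eta) ^+ 2) ->
  entropy (ptrace1 (V *m diag_state s *m adjmx V)) =
  - (xlnx l1 + xlnx l2 + xlnx (s ord_max ^+ 2 * (eta / 2%:R))
     + xlnx (s ord0 ^+ 2 * (eta / 2%:R))).
Proof.
move=> sum_l prod_l; rewrite complementary_diag_state entropy_mulmxC.
rewrite (entropy_real_char_poly (char_poly_env_frame_gram sum_l prod_l)).
by rewrite !big_cons big_nil addr0 !addrA.
Qed.

End Stinespring.

Lemma entropy_depol_diag_state (R : realType) (eta : R) (s : 'I_2 -> R) :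
  s ord0 ^+ 2 + s ord_max ^+ 2 = 1 ->
  entropy (depol eta (diag_state s)) =
  - (xlnx ((1 - eta) * s ord0 ^+ 2 + eta / 2%:R)
     + xlnx ((1 - eta) * s ord_max ^+ 2 + eta / 2%:R)).
Proof.
move=> s_norm.
have tr1 : \tr (diag_state s) = 1 by rewrite mxtrace_diag_state big_ord2 /= s_norm.
have entry c c' : depol eta (diag_state s) c c' =
    (((1 - eta) * s c ^+ 2 + eta / 2%:R) * (c == c')%:R)%:C.
  rewrite /depol tr1 !mxE; case: (c == c'); rewrite ?mulr1n ?mulr0n ?mulr0 ?addr0 //.
  by rewrite !(rmorphM, rmorphD, rmorphB, rmorphN, fmorphV, rmorph_nat, rmorph1) /=; field.
rewrite (entropy_real_char_poly (s := [:: (1 - eta) * s ord0 ^+ 2 + eta / 2%:R;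
                                          (1 - eta) * s ord_max ^+ 2 + eta / 2%:R])).
  by rewrite !big_cons big_nil addr0.
rewrite char_poly_trig; last first.
  apply/is_trig_mxP => c c' lt_cc'; rewrite entry (_ : (c == c') = false) ?mulr0 //.
  by apply/eqP => eq_c; rewrite eq_c ltnn in lt_cc'.
by rewrite big_ord2 !big_cons big_nil mulr1 !entry !eqxx !mulr1.
Qed.

Theorem theorem1 (R : realType) (eta : R) (e : nat)
  (V : 'M[R[i]]_(2 * e, 2)) :
  0 < eta -> eta <= 1 ->
  is_isometry V ->
  (forall rho : 'M[R[i]]_2, ptrace2 (V *m rho *m adjmx V) = depol eta rho) ->
  (0 < coh_info (fun rho => ptrace1 (V *m rho *m adjmx V)) (depol eta))%E.
Proof.
move=> eta_gt0 eta_le1 _ stineV.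
have [a [b [a_gt0 b_gt0 ab1 ln_ab]]] :=
  exists_ln_ratio ((1 - eta) / (eta / 2%:R) * (ln (1 - eta / 2%:R) - ln (eta / 2%:R))).
have [l1 [l2 [l1_ge0 l2_ge0 sum_l prod_l]]] :=
  exists_depol_gram_roots eta_gt0 eta_le1 a_gt0 b_gt0 ab1.
pose s (c : 'I_2) := Num.sqrt (if c == ord0 then a else b).
have s0 : s ord0 ^+ 2 = a by rewrite /s eqxx sqr_sqrtr // ltW.
have s1 : s ord_max ^+ 2 = b by rewrite /s /= sqr_sqrtr // ltW.
have s_norm : s ord0 ^+ 2 + s ord_max ^+ 2 = 1 by rewrite s0 s1.
have gap := depol_diag_gap eta_gt0 eta_le1 a_gt0 b_gt0 ab1 ln_ab l1_ge0 l2_ge0 sum_l.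
apply: (lt_le_trans _ (ereal_sup_ubound _)); last first.
  by exists (diag_state s) => //; apply: density_diag_state; rewrite big_ord2.
rewrite lte_fin /coh_info_state (entropy_depol_diag_state eta s_norm).
rewrite (entropy_complementary_diag_state stineV (l1 := l1) (l2 := l2));
  rewrite ?s0 ?s1 ?ab1 ?mul1r //.
have : 0 < b * (eta / 2%:R) by rewrite mulr_gt0 // divr_gt0.
lra.
Qed.
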